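(* Let $B$ be the 3-manifold that is the $T^2$-bundle over $S^1$ with monodromy $-\mathrm{id}:T^2\to T^2$ (induced by $\begin{pmatrix}-1&0\\0&-1\end{pmatrix}$ on $\mathbb{R}^2/\mathbb{Z}^2$). Then $B$ smoothly embeds in $S^4$. *)

From HB Require Import structures.
From mathcomp Require Import all_boot all_order all_algebra.
From mathcomp Require Import all_classical all_reals all_analysis.
From mathcomp Require Import Rstruct Rstruct_topology.
From Stdlib Require Import Rdefinitions.
Set Implicit Arguments. Unset Strict Implicit. Unset Printing Implicit Defensive.
Import Order.TTheory GRing.Theory Num.Theory.
Import numFieldNormedType.Exports.
Local Open Scope ring_scope.

Notation RR := Rdefinitions.R.

Fixpoint Ck (V W : normedModType RR) (k : nat) (f : V -> W) : Prop :=
  match k with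
  | 0 => continuous f
  | k'.+1 => (forall x, differentiable f x) /\
             (forall v : V, Ck k' (fun x => derive f x v))
  end.

Definition smooth (V W : normedModType RR) (f : V -> W) : Prop :=
  forall k, Ck k f.

(* The deck group Gamma of the covering R^3 -> B, where B is the mapping torus
   of -id on T^2 = R^2/Z^2 (coordinates (t, a, b), t the base coordinate):
   (t, a, b) |-> (t + n, (-1)^n a + m1, (-1)^n b + m2),  n m1 m2 : int. *)
Definition deck (n m1 m2 : int) (x : 'rV[RR]_3) : 'rV[RR]_3 :=
  \row_(i < 3)
    (if val i == 0%N then x ord0 i + n%:~R
     else (-1) ^ n * x ord0 i + (if val i == 1%N then m1 else m2)%:~R).

Definition in_S4 (y : 'rV[RR]_5) : Prop := \sum_(i < 5) (y ord0 i) ^+ 2 = 1.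

(* A smooth embedding B -> S^4, expressed on the universal cover: a smooth
   Gamma-invariant map R^3 -> R^5 with values in S^4, injective modulo Gamma,
   with injective differential everywhere.  Since B is compact, an injective
   immersion of B is a smooth embedding. *)
Definition smooth_embedding_B_S4 (f : 'rV[RR]_3 -> 'rV[RR]_5) : Prop :=
  [/\ smooth f,
      (forall x, in_S4 (f x)),
      (forall n m1 m2 x, f (deck n m1 m2 x) = f x),
      (forall x y, f x = f y -> exists n m1 m2, y = deck n m1 m2 x) &
      (forall x v, derive f x v = 0 -> v = 0)].

From mathcomp Require Import all_boot all_order all_algebra.
From mathcomp Require Import all_classical all_reals all_analysis.
From mathcomp Require Import Rstruct Rstruct_topology.
From mathcomp Require Import ring lra.
Set Implicit Arguments.
Unset Strict Implicit.
Unset Printing Implicit Defensive.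
Import Order.TTheory GRing.Theory Num.Theory.
Import numFieldNormedType.Exports.
Local Open Scope ring_scope.

(* The torus T^2 = R^2/Z^2 sits in R^3 as the surface
   (a, b) |-> (rho cos A, rho sin A, 25 sin B),  A = 2 pi a, B = 2 pi b,
   rho = 36 + 20 cos B > 0, and on it -id is the half turn about the first
   axis.  Let this R^3 turn about its first axis by the angle pi t while it
   travels once around a circle of radius h = 48 - 15 cos B > 0 at angle
   2 pi t in a transverse R^2.  After one turn of the base the fibre has been
   glued back to itself by the half turn, i.e. by -id, so the map descends
   to an injective immersion of B into R^5.  Since 36 * 20 = 48 * 15 and
   20^2 + 15^2 = 25^2, the squared norm rho^2 + (25 sin B)^2 + h^2 is the
   constant 36^2 + 48^2 + 25^2 = 65^2, so dividing by 65 lands in S^4.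
   Smoothness is proved once and for all for maps whose coordinates are
   built from coordinates and constants by +, *, sin and cos: this class is
   closed under directional derivatives. *)

Section IntegerShifts.
Context {U : zmodType} {V : unitRingType}.
Implicit Type f : U -> V.

Lemma periodicz f T : periodic f T -> forall n a, f (a + T *~ n) = f a.
Proof.
move=> fT [] k a; first by rewrite -pmulrn (periodicn fT).
by rewrite NegzE mulrNz -pmulrn -[in RHS](subrK (T *+ k.+1) a) (periodicn fT).
Qed.

Lemma alternatingz f T :
  alternating f T -> forall n a, f (a + T *~ n) = (-1) ^ n * f a.
Proof.
move=> fT [] k a; first by rewrite -pmulrn (alternatingn fT).
rewrite NegzE mulrNz -exprz_inv invrN1 -pmulrn.
rewrite -[in RHS](subrK (T *+ k.+1) a) (alternatingn fT).
by rewrite mulrA -exprD -signr_odd addnn odd_double mul1r.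
Qed.

End IntegerShifts.

Section SignZ.
Context {R : numDomainType}.
Implicit Type n : int.

Lemma sqr_signz n : (-1 : R) ^ n * (-1) ^ n = 1.
Proof. by rewrite expN1r -exprD -signr_odd addnn odd_double. Qed.

Lemma signzP n : (-1 : R) ^ n = 1 \/ (-1 : R) ^ n = -1.
Proof. by rewrite expN1r -signr_odd; case: odd; [right|left]. Qed.

End SignZ.

Section Rotation.
Variable R : comRingType.

Lemma unit_circle_mul_eq0 (c s y : R) : c ^+ 2 + s ^+ 2 = 1 ->
  c * y = 0 -> s * y = 0 -> y = 0.
Proof.
move=> cs1 cy sy; transitivity (c * (c * y) + s * (s * y)).
  by rewrite -[LHS]mul1r -cs1; ring.
by rewrite cy sy !mulr0 addr0.
Qed.

Lemma rot_eq0 (c s p q : R) : c ^+ 2 + s ^+ 2 = 1 ->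
  c * p - s * q = 0 -> s * p + c * q = 0 -> p = 0 /\ q = 0.
Proof.
move=> cs1 e1 e2; split.
- transitivity (c * (c * p - s * q) + s * (s * p + c * q)).
    by rewrite -[LHS]mul1r -cs1; ring.
  by rewrite e1 e2 !mulr0 addr0.
- transitivity (c * (s * p + c * q) - s * (c * p - s * q)).
    by rewrite -[LHS]mul1r -cs1; ring.
  by rewrite e1 e2 !mulr0 subr0.
Qed.

Lemma rot_inj (c s p q p' q' : R) : c ^+ 2 + s ^+ 2 = 1 ->
  c * p - s * q = c * p' - s * q' -> s * p + c * q = s * p' + c * q' ->
  p = p' /\ q = q'.
Proof.
move=> cs1 e1 e2; have [] := @rot_eq0 c s (p - p') (q - q') cs1.
- transitivity (c * p - s * q - (c * p' - s * q')); first by ring.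
  by rewrite e1 subrr.
- transitivity (s * p + c * q - (s * p' + c * q')); first by ring.
  by rewrite e2 subrr.
by move=> /subr0_eq pp' /subr0_eq qq'.
Qed.

End Rotation.

Section Trig.
Variable R : realType.
Implicit Types (x y : R) (n : int).

Lemma cos_halfturnDz x n : cos (pi * (x + n%:~R)) = (-1) ^ n * cos (pi * x).
Proof. by rewrite mulrDr mulrzr (alternatingz (@cosDpi R)). Qed.

Lemma sin_halfturnDz x n : sin (pi * (x + n%:~R)) = (-1) ^ n * sin (pi * x).
Proof. by rewrite mulrDr mulrzr (alternatingz (@sinDpi R)). Qed.

Lemma cos_turnDz x n : cos (2 * pi * (x + n%:~R)) = cos (2 * pi * x).
Proof. by rewrite mulrDr mulrzr mulr_natl (periodicz (@cosD2pi R)). Qed.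

Lemma sin_turnDz x n : sin (2 * pi * (x + n%:~R)) = sin (2 * pi * x).
Proof. by rewrite mulrDr mulrzr mulr_natl (periodicz (@sinD2pi R)). Qed.

Lemma cos_turn_signz n x : cos (2 * pi * ((-1) ^ n * x)) = cos (2 * pi * x).
Proof.
by rewrite mulrCA; case: (signzP (R := R) n) => ->; rewrite ?mul1r ?mulN1r ?cosN.
Qed.

Lemma sin_turn_signz n x :
  sin (2 * pi * ((-1) ^ n * x)) = (-1) ^ n * sin (2 * pi * x).
Proof.
by rewrite mulrCA; case: (signzP (R := R) n) => ->; rewrite ?mul1r ?mulN1r ?sinN.
Qed.

Lemma cos_eq1_02pi x : 0 <= x < 2 * pi -> cos x = 1 -> x = 0.
Proof.
move=> /andP[x0 x2pi] cx1.
have cos_eq1_0pi y : 0 <= y <= pi -> cos y = 1 -> y = 0.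
  move=> y0pi cy1; apply: (@cos_inj R); rewrite ?cos0 // in_itv /=.
  by rewrite lexx pi_ge0.
have [xpi|pix] := leP x pi; first by apply: cos_eq1_0pi => //; rewrite x0 xpi.
suff: 2 * pi - x = 0 by lra.
apply: cos_eq1_0pi; first by apply/andP; split; lra.
by rewrite addrC mulr_natl cosD2pi cosN.
Qed.

Lemma cos_sin_turn_eq x y : cos (2 * pi * x) = cos (2 * pi * y) ->
  sin (2 * pi * x) = sin (2 * pi * y) -> exists k : int, y = x + k%:~R.
Proof.
move=> cxy sxy; have pi0 := @pi_gt0 R.
exists (Num.floor (y - x)).
set k := Num.floor (y - x); set r := y - x - k%:~R.
have r01 : 0 <= r < 1.
  have k1 : k%:~R <= y - x := floor_le _.
  have := floorD1_gt (y - x); rewrite -/k intrD => k2.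
  by apply/andP; split; rewrite /r; lra.
have /eqP : 2 * pi * r = 0.
  apply: cos_eq1_02pi; first by apply/andP; split; nra.
  rewrite /r -intrN cos_turnDz.
  by rewrite mulrBr cosB -cxy -sxy -!expr2 cos2Dsin2.
by rewrite mulf_eq0 gt_eqF ?mulr_gt0 //= /r => /eqP; lra.
Qed.

Lemma cos_sin_turn_signz n x y : cos (2 * pi * y) = cos (2 * pi * x) ->
  sin (2 * pi * y) = (-1) ^ n * sin (2 * pi * x) ->
  exists k : int, y = (-1) ^ n * x + k%:~R.
Proof.
move=> cxy sxy; apply: cos_sin_turn_eq.
  by rewrite cos_turn_signz.
by rewrite sin_turn_signz.
Qed.

Lemma polar_inj (r r' x y : R) : 0 < r -> 0 < r' ->
  r * cos x = r' * cos y -> r * sin x = r' * sin y ->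
  [/\ r = r', cos x = cos y & sin x = sin y].
Proof.
move=> r0 r'0 ec es.
have rr' : r = r'.
  have : r ^+ 2 = r' ^+ 2.
    transitivity ((r * cos x) ^+ 2 + (r * sin x) ^+ 2).
      by rewrite !exprMn -mulrDr cos2Dsin2 mulr1.
    by rewrite ec es !exprMn -mulrDr cos2Dsin2 mulr1.
  by move/eqP; rewrite eqrXn2 ?ltW // => /eqP.
have r0I := mulfI (lt0r_neq0 r0).
by move: ec es; rewrite -rr' => /r0I ec /r0I.
Qed.

End Trig.

Section TrigExpr.
Variables (R : realType) (m : nat).

Inductive trig_expr :=
| Const of R
| Coord of 'I_m
| Add of trig_expr & trig_expr
| Mul of trig_expr & trig_expr
| Sin of trig_expr
| Cos of trig_expr.

Fixpoint teval (e : trig_expr) (x : 'rV[R]_m) : R :=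
  match e with
  | Const c => c
  | Coord i => x ord0 i
  | Add e1 e2 => teval e1 x + teval e2 x
  | Mul e1 e2 => teval e1 x * teval e2 x
  | Sin e1 => sin (teval e1 x)
  | Cos e1 => cos (teval e1 x)
  end.

Fixpoint tderive (e : trig_expr) (v : 'rV[R]_m) : trig_expr :=
  match e with
  | Const _ => Const 0
  | Coord i => Const (v ord0 i)
  | Add e1 e2 => Add (tderive e1 v) (tderive e2 v)
  | Mul e1 e2 => Add (Mul e1 (tderive e2 v)) (Mul e2 (tderive e1 v))
  | Sin e1 => Mul (Cos e1) (tderive e1 v)
  | Cos e1 => Mul (Const (-1)) (Mul (Sin e1) (tderive e1 v))
  end.

Let dsin y : differentiable (@sin R) y.
Proof. exact/derivable1_diffP/derivable_sin. Qed.

Let dcos y : differentiable (@cos R) y.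
Proof. exact/derivable1_diffP/derivable_cos. Qed.

Lemma differentiable_teval e x : differentiable (teval e) x.
Proof.
elim: e x => [c|i|e1 IH1 e2 IH2|e1 IH1 e2 IH2|e1 IH|e1 IH] x /=.
- exact: differentiable_cst.
- exact: differentiable_coord.
- exact: differentiableD.
- exact: differentiableM.
- exact: differentiable_comp.
- exact: differentiable_comp.
Qed.

Lemma derive_comp {f : 'rV[R]_m -> R} {g : R -> R} {x} v :
  differentiable f x -> differentiable g (f x) ->
  'D_v (g \o f) x = derive1 g (f x) * 'D_v f x.
Proof.
move=> df dg.
rewrite deriveE; last exact: differentiable_comp.
by rewrite diff_comp //= diff1E // -deriveE // mulrC.
Qed.

Lemma derive_teval e x v : 'D_v (teval e) x = teval (tderive e v) x.
Proof.
have De e' y : derivable (teval e') y v.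
  exact/diff_derivable/differentiable_teval.
elim: e x => [c|i|e1 IH1 e2 IH2|e1 IH1 e2 IH2|e1 IH|e1 IH] x /=.
- exact: derive_cst.
- have := @derive_mx R _ 1 m id x v (@derivable_id R _ x v).
  by rewrite derive_id => /matrixP /(_ ord0 i); rewrite mxE.
- by rewrite deriveD // IH1 IH2.
- by rewrite deriveM // IH1 IH2.
- rewrite (derive_comp v (differentiable_teval e1 x) (dsin _)).
  by rewrite derive1E derive_val IH.
- rewrite (derive_comp v (differentiable_teval e1 x) (dcos _)).
  by rewrite derive1E derive_val IH mulN1r mulNr.
Qed.

Lemma row_teval_sum n (E : 'I_n -> trig_expr) :
  (fun x => \row_j teval (E j) x) =
  \sum_(j < n) (fun x => teval (E j) x *: (delta_mx 0 j : 'rV[R]_n)).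
Proof.
rewrite fct_sumE; apply/funext => x.
by rewrite [LHS]row_sum_delta; apply: eq_bigr => j _; rewrite mxE.
Qed.

Lemma differentiable_row_teval n (E : 'I_n -> trig_expr) x :
  differentiable (fun y => \row_j teval (E j) y) x.
Proof.
rewrite row_teval_sum; apply: differentiable_sum => j.
exact: differentiableZl (differentiable_teval _ _).
Qed.

Lemma derive_row_teval n (E : 'I_n -> trig_expr) x v :
  'D_v (fun y => \row_j teval (E j) y) x = \row_j teval (tderive (E j) v) x.
Proof.
rewrite derive_mx; last exact/diff_derivable/differentiable_row_teval.
apply/rowP => j; rewrite !mxE -derive_teval.
by rewrite (_ : (fun y => _) = teval (E j)) //; apply/funext => y; rewrite mxE.
Qed.

End TrigExpr.

Arguments Const {R m}.
Arguments Coord {R m}.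
Arguments Add {R m}.
Arguments Mul {R m}.
Arguments Sin {R m}.
Arguments Cos {R m}.
Arguments teval {R m}.
Arguments tderive {R m}.

Lemma Ck_row_teval m n k (E : 'I_n -> trig_expr RR m) :
  Ck k (fun x => \row_j teval (E j) x).
Proof.
elim: k E => [|k IH] E /=.
  by move=> x; exact/differentiable_continuous/differentiable_row_teval.
split=> [x|v]; first exact: differentiable_row_teval.
rewrite (_ : (fun x => _) = (fun x => \row_j teval (tderive (E j) v) x)).
  exact: IH.
by apply/funext => x; rewrite derive_row_teval.
Qed.

Definition i0 : 'I_3 := @Ordinal 3 0 isT.
Definition i1 : 'I_3 := @Ordinal 3 1 isT.
Definition i2 : 'I_3 := @Ordinal 3 2 isT.

Lemma row3P (T : Type) (u v : 'rV[T]_3) : u ord0 i0 = v ord0 i0 ->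
  u ord0 i1 = v ord0 i1 -> u ord0 i2 = v ord0 i2 -> u = v.
Proof.
move=> e0 e1 e2; apply/rowP => -[[|[|[|k]]] hk] //.
- by rewrite (_ : Ordinal hk = i0) //; apply: val_inj.
- by rewrite (_ : Ordinal hk = i1) //; apply: val_inj.
- by rewrite (_ : Ordinal hk = i2) //; apply: val_inj.
Qed.

Definition angle (c : RR) (i : 'I_3) : trig_expr RR 3 :=
  Mul (Const c) (Coord i).
Definition e_rho := Add (Const 36) (Mul (Const 20) (Cos (angle (2 * pi) i2))).
Definition e_h := Add (Const 48) (Mul (Const (-15)) (Cos (angle (2 * pi) i2))).
Definition e_u := Mul e_rho (Sin (angle (2 * pi) i1)).
Definition e_w := Mul (Const 25) (Sin (angle (2 * pi) i2)).
Definition e_coords : seq (trig_expr RR 3) :=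
  [:: Mul e_rho (Cos (angle (2 * pi) i1));
      Add (Mul (Cos (angle pi i0)) e_u)
          (Mul (Const (-1)) (Mul (Sin (angle pi i0)) e_w));
      Add (Mul (Sin (angle pi i0)) e_u) (Mul (Cos (angle pi i0)) e_w);
      Mul e_h (Cos (angle (2 * pi) i0));
      Mul e_h (Sin (angle (2 * pi) i0))].

Definition embS4 (x : 'rV[RR]_3) : 'rV[RR]_5 :=
  \row_j teval (Mul (Const (65^-1)) (nth (Const 0) e_coords j)) x.

Lemma embS4_smooth : smooth embS4.
Proof. by move=> k; apply: Ck_row_teval. Qed.

Lemma embS4_in_S4 x : in_S4 (embS4 x).
Proof.
rewrite /in_S4 !big_ord_recl big_ord0 !mxE /=.
set A := 2 * pi * x ord0 i1; set B := 2 * pi * x ord0 i2.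
set T := pi * x ord0 i0; set P := 2 * pi * x ord0 i0.
have := cos2Dsin2 A; have := cos2Dsin2 B.
have := cos2Dsin2 T; have := cos2Dsin2 P.
move: (cos A) (sin A) (cos B) (sin B) (cos T) (sin T) (cos P) (sin P).
move=> cA sA cB sB cT sT cP sP hP hT hB hA; apply: subr0_eq.
transitivity (65^-2 * ((36 + 20 * cB) ^+ 2 * (cA ^+ 2 + sA ^+ 2 - 1)
  + ((36 + 20 * cB) ^+ 2 * sA ^+ 2 + 625 * sB ^+ 2) * (cT ^+ 2 + sT ^+ 2 - 1)
  + (48 - 15 * cB) ^+ 2 * (cP ^+ 2 + sP ^+ 2 - 1)
  + 625 * (cB ^+ 2 + sB ^+ 2 - 1))).
  by field.
by rewrite hA hB hT hP subrr !mulr0 !addr0 mulr0.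
Qed.

Lemma embS4_deck n m1 m2 x : embS4 (deck n m1 m2 x) = embS4 x.
Proof.
have d0 : deck n m1 m2 x ord0 i0 = x ord0 i0 + n%:~R by rewrite mxE.
have d1 : deck n m1 m2 x ord0 i1 = (-1) ^ n * x ord0 i1 + m1%:~R by rewrite mxE.
have d2 : deck n m1 m2 x ord0 i2 = (-1) ^ n * x ord0 i2 + m2%:~R by rewrite mxE.
apply/rowP => j; rewrite !mxE.
case: j => [[|[|[|[|[|j]]]]] hj] //=; rewrite ?d0 ?d1 ?d2;
  rewrite ?cos_turnDz ?sin_turnDz ?cos_halfturnDz ?sin_halfturnDz;
  rewrite ?cos_turn_signz ?sin_turn_signz;
  by case: (signzP (R := RR) n) => sgn; rewrite ?sgn; ring.
Qed.

Lemma embS4_inj x y : embS4 x = embS4 y -> exists n m1 m2, y = deck n m1 m2 x.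
Proof.
move=> /rowP exy.
have coord k (hk : (k < 5)%N) :
    teval (nth (Const 0) e_coords k) x = teval (nth (Const 0) e_coords k) y.
  by move: (exy (Ordinal hk)); rewrite !mxE => /mulfI; apply; rewrite invr_eq0.
move: (coord 0 isT) (coord 1 isT) (coord 2 isT) (coord 3 isT) (coord 4 isT).
move=> /=.
set t := x ord0 i0; set a := x ord0 i1; set b := x ord0 i2.
set t' := y ord0 i0; set a' := y ord0 i1; set b' := y ord0 i2.
move=> e1 e2 e3 e4 e5.
have h_gt0 (z : RR) : 0 < 48 + -15 * cos z by have := cos_le1 z; lra.
have rho_neq0 (z : RR) : 36 + 20 * cos z != 0.
  by apply: lt0r_neq0; have := cos_geN1 z; lra.
have [hh cP sP] := polar_inj (h_gt0 _) (h_gt0 _) e4 e5.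
have cB : cos (2 * pi * b') = cos (2 * pi * b) by lra.
have [n t'E] := cos_sin_turn_eq cP sP.
rewrite t'E cos_halfturnDz sin_halfturnDz cB in e2 e3; rewrite cB in e1.
set s := (-1) ^ n in e2 e3.
have [uE wE] : (36 + 20 * cos (2 * pi * b)) * sin (2 * pi * a) =
      s * ((36 + 20 * cos (2 * pi * b)) * sin (2 * pi * a')) /\
    25 * sin (2 * pi * b) = s * (25 * sin (2 * pi * b')).
  apply: (rot_inj (cos2Dsin2 (pi * t))).
  - by apply: (etrans _ (etrans e2 _)); ring.
  - by apply: (etrans _ (etrans e3 _)); ring.
have sA : sin (2 * pi * a') = s * sin (2 * pi * a).
  apply: (mulfI (rho_neq0 (2 * pi * b))).
  by rewrite [RHS]mulrCA uE mulrA sqr_signz mul1r.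
have sB : sin (2 * pi * b') = s * sin (2 * pi * b).
  by apply: (@mulfI _ 25) => //; rewrite [RHS]mulrCA wE mulrA sqr_signz mul1r.
have cA : cos (2 * pi * a') = cos (2 * pi * a).
  by apply: (mulfI (rho_neq0 (2 * pi * b))); rewrite e1.
have [m1 a'E] := cos_sin_turn_signz cA sA.
have [m2 b'E] := cos_sin_turn_signz cB sB.
by exists n, m1, m2; apply: row3P; rewrite mxE.
Qed.

Lemma embS4_immersion x v : 'D_v embS4 x = 0 -> v = 0.
Proof.
rewrite /embS4 derive_row_teval => /rowP dv.
have coord k (hk : (k < 5)%N) :
    teval (tderive (nth (Const 0) e_coords k) v) x = 0.
  move: (dv (Ordinal hk)); rewrite !mxE /= mulr0 addr0 => /eqP.
  by rewrite mulf_eq0 invr_eq0 pnatr_eq0 => /eqP.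
suff : [/\ v ord0 i0 = 0, v ord0 i1 = 0 & v ord0 i2 = 0].
  by case=> vt va vb; apply: row3P; rewrite mxE.
move: (coord 0 isT) (coord 1 isT) (coord 2 isT) (coord 3 isT) (coord 4 isT).
move=> /=.
set B := 2 * pi * x ord0 i2.
have h_gt0 : 0 < 48 + -15 * cos B by have := cos_le1 B; lra.
have rho_gt0 : 0 < 36 + 20 * cos B by have := cos_geN1 B; lra.
have := cos2Dsin2 B; have := cos2Dsin2 (2 * pi * x ord0 i1).
have := cos2Dsin2 (pi * x ord0 i0); have := cos2Dsin2 (2 * pi * x ord0 i0).
move: h_gt0 rho_gt0.
move: (cos B) (sin B) (cos (2 * pi * x ord0 i1)) (sin (2 * pi * x ord0 i1)).
move: (cos (pi * x ord0 i0)) (sin (pi * x ord0 i0)).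
move: (cos (2 * pi * x ord0 i0)) (sin (2 * pi * x ord0 i0)).
move: (v ord0 i0) (v ord0 i1) (v ord0 i2) => vt va vb cP sP cT sT cB sB cA sA.
move=> h_gt0 rho_gt0 hP hT hA hB Z1 Z2 Z3 Z4 Z5.
have pi_gt0 := @pi_gt0 RR.
have cancel c y : 0 < c -> c * y = 0 -> y = 0.
  by move=> /lt0r_neq0 c0 /eqP; rewrite mulf_eq0 (negPf c0) => /eqP.
have [dh hdP] : 30 * pi * (sB * vb) = 0 /\ 2 * pi * (48 + -15 * cB) * vt = 0.
  by apply: (rot_eq0 hP); [apply: (etrans _ Z4) | apply: (etrans _ Z5)]; ring.
have sBvb : sB * vb = 0 by apply: cancel dh; lra.
have vt0 : vt = 0 by apply: cancel hdP; nra.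
rewrite vt0 in Z2 Z3.
have [du dw] : 2 * pi * (36 + 20 * cB) * (cA * va) - 40 * pi * sA * (sB * vb) = 0
               /\ 50 * pi * (cB * vb) = 0.
  by apply: (rot_eq0 hT); [apply: (etrans _ Z2) | apply: (etrans _ Z3)]; ring.
have vb0 : vb = 0.
  by apply: (unit_circle_mul_eq0 hB _ sBvb); apply: cancel dw; lra.
rewrite sBvb mulr0 subr0 in du.
have dr : 2 * pi * (36 + 20 * cB) * (sA * va) = 0.
  apply/eqP; rewrite -oppr_eq0; apply/eqP.
  by apply: (etrans _ Z1); rewrite vb0; ring.
have va0 : va = 0.
  apply: (unit_circle_mul_eq0 hA); last by apply: cancel dr; nra.
  by apply: cancel du; nra.
by split.
Qed.

Theorem mainTheorem8 :
  exists f : 'rV[RR]_3 -> 'rV[RR]_5, smooth_embedding_B_S4 f.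
Proof.
exists embS4; split.
- exact: embS4_smooth.
- exact: embS4_in_S4.
- exact: embS4_deck.
- exact: embS4_inj.
- exact: embS4_immersion.
Qed.
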